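(* Let $\boldsymbol{x}\in\mathbb{R}^d$ be a random vector with distribution $p(\boldsymbol{x})$ and let $\boldsymbol{z}\sim\mathcal N(\mathbf 0,\mathbf I)$ be independent of $\boldsymbol{x}$. Let $\{S_j\}_{j=1}^k$ be a partition of the index set $\{1,\dots,d\}$, and for each $j$ let $0\le t_{\text{start}_j}<t_{\text{end}_j}$ be given such that the intervals $[t_{\text{start}_j},t_{\text{end}_j}]$ for different $j$ do not overlap. Let $\mathbf A(t)$ be the diagonal $d\times d$ matrix whose $i$-th diagonal entry, for $i\in S_j$, is $$\mathbf A(t)_{ii}=\begin{cases}1, & 0\le t\le t_{\text{start}_j},\\ \dfrac{t-t_{\text{end}_j}}{t_{\text{start}_j}-t_{\text{end}_j}}, & t_{\text{start}_j}<t\le t_{\text{end}_j},\\ 0, & t>t_{\text{end}_j},\end{cases}$$ and set $\boldsymbol{x}_t=\mathbf A(t)\boldsymbol{x}+(\mathbf I-\mathbf A(t))\boldsymbol{z}$. Let $\boldsymbol{x}_{\boldsymbol\theta^*}(\boldsymbol{x}_t,t)=\mathbb E[\boldsymbol{x}\mid \boldsymbol{x}_t]$ denote the optimal denoiser (the minimizer over functions $\boldsymbol{x}_{\boldsymbol\theta}$ of $\mathbb E\|\boldsymbol{x}-\boldsymbol{x}_{\boldsymbol\theta}(\boldsymbol{x}_t,t)\|_2^2$), viewed as a function of $\boldsymbol{x}_t$. Then for every $t$ and every group index $j$ with $t_{\text{end}_j}<t$, we have $\frac{\partial}{\partial(\boldsymbol{x}_t)_i}\boldsymbol{x}_{\boldsymbol\theta^*}(\boldsymbol{x}_t,t)=\mathbf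 0$ for all $i\in S_j$.
   Context: This is the ''groupwise diffusion'' forward process: each group $S_j$ of coordinates of the data is linearly interpolated to independent Gaussian noise during its own time interval $[t_{\text{start}_j},t_{\text{end}_j}]$, and remains data before and pure noise after that interval. $(\boldsymbol{x}_t)_i$ denotes the $i$-th coordinate of $\boldsymbol{x}_t$. *)

From HB Require Import structures.
From mathcomp Require Import all_boot all_order all_algebra.
From mathcomp Require Import all_classical all_reals all_analysis.
Set Implicit Arguments. Unset Strict Implicit. Unset Printing Implicit Defensive.
Import Order.TTheory GRing.Theory Num.Theory numFieldNormedType.Exports.
Local Open Scope classical_set_scope.
Local Open Scope ring_scope.

(* Borel sigma-algebra on R^d = 'rV[R]_d : generated by the coordinate maps
   (this is the Borel sigma-algebra of R^d). *)
Definition rV_borel (R : realType) (d : nat) : set (set 'rV[R]_d) :=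
  g_sigma_preimage (fun (i : 'I_d) (v : 'rV[R]_d) => v ord0 i).

Definition rV_measurable_fun (R : realType) (d : nat)
    (g : 'rV[R]_d -> 'rV[R]_d) : Prop :=
  forall (i : 'I_d) (B : set R), measurable B ->
    rV_borel ((fun v => g v ord0 i) @^-1` B).

Definition random_vector (R : realType) (d0 : measure_display)
    (Omega : measurableType d0) (d : nat) (X : Omega -> 'rV[R]_d) : Prop :=
  forall i : 'I_d, measurable_fun setT (fun w => X w ord0 i).

Definition group_coef (R : realType) (ts te t : R) : R :=
  if t <= ts then 1 else if t <= te then (t - te) / (ts - te) else 0.

(* Groupwise forward process: grp i is the index j of the group S_j
   containing coordinate i; x_t = A(t) x + (I - A(t)) z. *)
Definition groupwise_xt (R : realType) (d0 : measure_display)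
    (Omega : measurableType d0) (d k : nat) (grp : 'I_d -> 'I_k)
    (ts te : 'I_k -> R) (x z : Omega -> 'rV[R]_d) (t : R) (w : Omega)
    : 'rV[R]_d :=
  \row_i (group_coef (ts (grp i)) (te (grp i)) t * x w ord0 i
          + (1 - group_coef (ts (grp i)) (te (grp i)) t) * z w ord0 i).

Definition mse (R : realType) (d0 : measure_display)
    (Omega : measurableType d0) (P : probability Omega R) (d : nat)
    (x y : Omega -> 'rV[R]_d) (g : 'rV[R]_d -> 'rV[R]_d) : \bar R :=
  (\int[P]_w (\sum_(i < d) (x w ord0 i - g (y w) ord0 i) ^+ 2)%:E)%E.

(* g is an optimal denoiser of x from y: a Borel map minimizing the MSE over
   all Borel maps (i.e. a version of E[x | y], as a function of y). *)
Definition optimal_denoiser (R : realType) (d0 : measure_display)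
    (Omega : measurableType d0) (P : probability Omega R) (d : nat)
    (x y : Omega -> 'rV[R]_d) (g : 'rV[R]_d -> 'rV[R]_d) : Prop :=
  rV_measurable_fun g /\
  forall h, rV_measurable_fun h -> (mse P x y g <= mse P x y h)%E.

(* z ~ N(0, I) and z independent of x: the joint law of (x, z_1, ..., z_d)
   is law(x) (x) N(0,1)^{(x) d}. *)
Definition std_gaussian_indep (R : realType) (d0 : measure_display)
    (Omega : measurableType d0) (P : probability Omega R) (d : nat)
    (x z : Omega -> 'rV[R]_d) : Prop :=
  forall (A : set 'rV[R]_d) (B : 'I_d -> set R),
    rV_borel A -> (forall i, measurable (B i)) ->
    P [set w | A (x w) /\ forall i, B i (z w ord0 i)] =
    (P (x @^-1` A) * \prod_(i < d) normal_prob 0 1 (B i))%E.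

From HB Require Import structures.
From mathcomp Require Import all_boot all_order all_algebra.
From mathcomp Require Import all_classical all_reals all_analysis.
From mathcomp Require Import measurable_realfun ring.
Import Order.TTheory GRing.Theory Num.Theory numFieldNormedType.Exports.
Local Open Scope classical_set_scope.
Local Open Scope ring_scope.
Set Implicit Arguments. Unset Strict Implicit. Unset Printing Implicit Defensive.

(* For a coordinate i of a group whose interval is over, (x_t)_i = z_i, which is
   independent of x and of the other coordinates of x_t.  Freezing coordinate i
   of an estimator h at a constant c thus gives estimators h_c whose mean squared
   errors average, over c ~ N(0,1), to that of h (Tonelli).  If h is optimal,
   no h_c does better, so some h_c is optimal again.  Freezing the coordinates
   of the group one after the other yields an optimal denoiser g that is
   constant along them, hence has vanishing partial derivatives there; and g
   agrees with f almost surely on x_t since, by the parallelogram identity, the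
   midpoint of two minimizers of the mean squared error that differ on a
   non-negligible set would do strictly better. *)

Section set_coord.
Variables (T : Type) (d : nat).

Definition set_coord (i : 'I_d) (c : T) (y : 'rV[T]_d) : 'rV[T]_d :=
  \row_l (if l == i then c else y ord0 l).

Lemma set_coord_id (i : 'I_d) (c : T) (y : 'rV[T]_d) :
  y ord0 i = c -> set_coord i c y = y.
Proof. by move=> yi; apply/rowP => l; rewrite mxE; case: eqP => [->|]. Qed.

Lemma set_coordK (i : 'I_d) (c u : T) (y : 'rV[T]_d) :
  set_coord i c (set_coord i u y) = set_coord i c y.
Proof. by apply/rowP => l; rewrite !mxE; case: eqP. Qed.

Lemma set_coordC (i l : 'I_d) (c u : T) (y : 'rV[T]_d) : i != l ->
  set_coord i c (set_coord l u y) = set_coord l u (set_coord i c y).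
Proof.
move=> il; apply/rowP => m; rewrite !mxE.
by have [->|//] := eqVneq m i; rewrite (negbTE il).
Qed.

End set_coord.

Lemma scale_delta_addr (R : pzRingType) d (i : 'I_d) (r : R) (y : 'rV[R]_d) :
  r *: delta_mx ord0 i + y = set_coord i (r + y ord0 i) y.
Proof.
apply/rowP => l; rewrite !mxE /=.
by have [->|_] := eqVneq l i; rewrite ?mulr1 // mulr0 add0r.
Qed.

Lemma derive_invariant_dir (R : numFieldType) (V W : normedModType R)
    (g : V -> W) (y v : V) :
  (forall r : R, g (r *: v + y) = g y) -> derivable g y v /\ 'D_v g y = 0.
Proof.
move=> gv; have quotient0 : (fun h : R => h^-1 *: ((g \o shift y) (h *: v) - g y)) = cst 0.
  by apply/funext => h /=; rewrite gv subrr scaler0.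
rewrite /derivable /derive quotient0.
by split; [exact: is_cvg_cst|exact: lim_cst].
Qed.

Section rV_measurable.
Variables (R : realType) (d : nat).

Definition rV_coord_sets : set (set 'rV[R]_d) :=
  \big[setU/set0]_(i < d)
    preimage_set_system setT (fun v : 'rV[R]_d => v ord0 i) measurable.

(* Its measurable sets are those of [rV_borel R d], by conversion. *)
Definition rV_meas := g_sigma_algebraType rV_coord_sets.

Lemma measurable_coord (i : 'I_d) : measurable_fun setT (fun v : rV_meas => v ord0 i).
Proof.
move=> _ B mB; rewrite setTI; apply: sub_sigma_algebra.
rewrite /rV_coord_sets -bigcup_seq; exists i; first by rewrite /= mem_index_enum.
by exists B; rewrite // setTI.
Qed.

Lemma measurable_fun_rV dT (T : measurableType dT) (F : T -> rV_meas) :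
  (forall i, measurable_fun setT (fun t => F t ord0 i)) -> measurable_fun setT F.
Proof.
move=> mF; apply: (@measurability _ _ T rV_meas setT F rV_coord_sets) => //.
move=> _ [A + <-]; rewrite /rV_coord_sets -bigcup_seq => -[i _ [B mB <-]].
by rewrite !setTI; have := mF i measurableT B mB; rewrite setTI.
Qed.

Lemma rV_measurable_funP (h : 'rV[R]_d -> 'rV[R]_d) : rV_measurable_fun h <->
  forall i, measurable_fun setT (fun v : rV_meas => h v ord0 i).
Proof.
split=> mh i.
- by move=> _ B mB; rewrite setTI; exact: mh.
- by move=> B mB; have := mh i measurableT B mB; rewrite setTI.
Qed.

Lemma measurable_set_coord (i : 'I_d) (c : R) :
  measurable_fun setT (fun y : rV_meas => set_coord i c y : rV_meas).
Proof.
apply: measurable_fun_rV => l.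
have -> : (fun y : rV_meas => set_coord i c y ord0 l) =
    if l == i then cst c else (fun y : rV_meas => y ord0 l).
  by apply/funext => y; rewrite mxE; case: ifP.
by case: ifP => _; [exact: measurable_cst|exact: measurable_coord].
Qed.

Lemma rV_measurable_fun_set_coord (i : 'I_d) (c : R) h : rV_measurable_fun h ->
  rV_measurable_fun (fun y => h (set_coord i c y)).
Proof.
move/rV_measurable_funP => mh; apply/rV_measurable_funP => l.
exact: measurableT_comp (mh l) (measurable_set_coord i c).
Qed.

Lemma measurable_forall_ord dT (T : measurableType dT) (Q : 'I_d -> set T) :
  (forall i, measurable (Q i)) -> measurable [set w | forall i, Q i w].
Proof.
move=> mQ; rewrite [X in measurable X](_ : _ = \bigcap_(i in setT) Q i).
  by apply: fin_bigcap_measurable => //; exact: finite_setT.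
by apply/seteqP; split=> w /= wQ i //; exact: wQ.
Qed.

End rV_measurable.

Lemma probability_integral_eq_lbound dT (T : measurableType dT) (R : realType)
    (mu : probability T R) (phi : T -> \bar R) (M : R) : 0 <= M ->
  measurable_fun setT phi -> (forall c, (M%:E <= phi c)%E) ->
  (\int[mu]_c phi c = M%:E)%E -> exists c, phi c = M%:E.
Proof.
move=> M0 mphi phiM intM.
pose psi c := (phi c - M%:E)%E.
have psi0 c : (0 <= psi c)%E by rewrite sube_ge0.
have mpsi : measurable_fun setT psi by apply: emeasurable_funB => //; exact: measurable_cst.
have int_psi : (\int[mu]_c psi c = 0)%E.
  have : (\int[mu]_c (psi c + M%:E) = \int[mu]_c psi c + M%:E)%E.
    rewrite ge0_integralD // integral_cst //.
    by rewrite [X in (_ * X)%E]probability_setT mule1.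
  under eq_integral => c _ do rewrite subeK //.
  by rewrite intM => /(congr1 (fun e => e - M%:E)%E); rewrite addeK // subee.
have [N [mN N0 psiN]] : ae_eq mu setT psi (cst 0%E).
  apply/ae_eq_integral_abs => //.
  by rewrite -int_psi; apply: eq_integral => c _; rewrite gee0_abs.
apply: contrapT => /forallNP phiNM.
suff : (mu setT <= mu N)%E by rewrite N0 probability_setT lee_fin ler10.
apply: le_measure; rewrite ?inE // => c _; apply: psiN => /(_ I) psic0.
apply: (phiNM c).
by rewrite -(subeK (phi c) (_ : M%:E \is a fin_num)) // -/(psi c) psic0 add0e.
Qed.

Lemma mse_ge0 (R : realType) d0 (Omega : measurableType d0) (P : probability Omega R)
    d (x y : Omega -> 'rV[R]_d) h : (0 <= mse P x y h)%E.
Proof.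
by apply: integral_ge0 => w _; rewrite lee_fin sumr_ge0 // => k _; exact: sqr_ge0.
Qed.

Lemma optimal_denoiser_mse_lt_oo (R : realType) d0 (Omega : measurableType d0)
    (P : probability Omega R) d (x y : Omega -> 'rV[R]_d) h :
  (\int[P]_w (\sum_(i < d) (x w ord0 i) ^+ 2)%:E < +oo)%E ->
  optimal_denoiser P x y h -> (mse P x y h < +oo)%E.
Proof.
move=> x2_fin [_ h_opt]; apply: le_lt_trans (h_opt (fun=> 0) _) _.
  by apply/rV_measurable_funP => i; exact: measurable_cst.
rewrite /mse (eq_integral (fun w => (\sum_(i < d) (x w ord0 i) ^+ 2)%:E)) //.
by move=> w _; congr EFin; apply: eq_bigr => i _; rewrite mxE subr0.
Qed.

Definition mid_fun (R : realType) d (f g : 'rV[R]_d -> 'rV[R]_d) y : 'rV[R]_d :=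
  \row_k ((f y ord0 k + g y ord0 k) / 2).

Lemma rV_measurable_mid_fun (R : realType) d (f g : 'rV[R]_d -> 'rV[R]_d) :
  rV_measurable_fun f -> rV_measurable_fun g -> rV_measurable_fun (mid_fun f g).
Proof.
move=> /rV_measurable_funP mf /rV_measurable_funP mg; apply/rV_measurable_funP => k.
rewrite (_ : (fun v => _) = (fun v : rV_meas R d => (f v ord0 k + g v ord0 k) / 2)).
  by apply: measurable_funM => //; exact: measurable_funD.
by apply/funext => v; rewrite mxE.
Qed.

(* The parallelogram identity, coordinatewise. *)
Lemma sqr_dist_midpoint (R : realType) d (a b c : 'rV[R]_d) :
  \sum_(k < d) (a ord0 k - b ord0 k) ^+ 2 + \sum_(k < d) (a ord0 k - c ord0 k) ^+ 2 =
  2 * \sum_(k < d) (a ord0 k - (b ord0 k + c ord0 k) / 2) ^+ 2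
    + 2^-1 * \sum_(k < d) (b ord0 k - c ord0 k) ^+ 2.
Proof. by rewrite -big_split !mulr_sumr -big_split; apply: eq_bigr => k _ /=; field. Qed.

Section mse_uniqueness.
Variables (R : realType) (d0 : measure_display) (Omega : measurableType d0)
  (P : probability Omega R) (d : nat) (x Y : Omega -> 'rV[R]_d).
Hypotheses (rvx : random_vector x) (mY : measurable_fun setT (Y : Omega -> rV_meas R d)).

Let sq_err (h : 'rV[R]_d -> 'rV[R]_d) w := \sum_(k < d) (x w ord0 k - h (Y w) ord0 k) ^+ 2.
Let sq_dist (f g : 'rV[R]_d -> 'rV[R]_d) w :=
  \sum_(k < d) (f (Y w) ord0 k - g (Y w) ord0 k) ^+ 2.

Let measurable_comp_Y h : rV_measurable_fun h ->
  forall k, measurable_fun setT (fun w => h (Y w) ord0 k).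
Proof. by move/rV_measurable_funP => mh k; exact: measurableT_comp (mh k) mY. Qed.

Let measurable_sq_err h : rV_measurable_fun h ->
  measurable_fun setT (fun w => (sq_err h w)%:E).
Proof.
move=> mh; apply/measurable_EFinP; apply: measurable_sum => k.
by apply: measurable_funX; apply: measurable_funB; [exact: rvx|exact: measurable_comp_Y].
Qed.

Let measurable_sq_dist f g : rV_measurable_fun f -> rV_measurable_fun g ->
  measurable_fun setT (fun w => (sq_dist f g w)%:E).
Proof.
move=> mf mg; apply/measurable_EFinP; apply: measurable_sum => k.
by apply: measurable_funX; apply: measurable_funB; exact: measurable_comp_Y.
Qed.

Lemma mse_mid_fun f g : rV_measurable_fun f -> rV_measurable_fun g ->
  (mse P x Y f + mse P x Y g =
   2%:E * mse P x Y (mid_fun f g) + 2^-1%:E * \int[P]_w (sq_dist f g w)%:E)%E.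
Proof.
move=> mf mg; have mm := rV_measurable_mid_fun mf mg.
have msq_dist := measurable_sq_dist mf mg.
rewrite /mse -ge0_integralD //.
rewrite -[in X in _ = (X + _)%E]ge0_integralZl //.
rewrite -[in X in _ = (_ + X)%E]ge0_integralZl //.
rewrite -ge0_integralD //.
- apply: eq_integral => w _; rewrite -!EFinM -!EFinD sqr_dist_midpoint.
  by congr (_ * _ + _)%:E; apply: eq_bigr => k _; rewrite mxE.
all: try by move=> w _; rewrite ?mule_ge0 ?lee_fin ?invr_ge0 // sumr_ge0 // => k _;
  exact: sqr_ge0.
all: by [apply: measurable_funeM; exact: measurable_sq_err|apply: measurable_funeM
         |exact: measurable_sq_err].
Qed.

Lemma optimal_denoiser_ae_unique f g :
  optimal_denoiser P x Y f -> optimal_denoiser P x Y g ->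
  (mse P x Y f < +oo)%E -> {ae P, forall w, f (Y w) = g (Y w)}.
Proof.
move=> [mf f_opt] [mg g_opt] f_fin.
have fg_eq : mse P x Y f = mse P x Y g by apply/le_anti; rewrite f_opt // g_opt.
have f_fin_num : mse P x Y f \is a fin_num by rewrite ge0_fin_numE ?mse_ge0.
have dist_ge0 : (0 <= \int[P]_w (sq_dist f g w)%:E)%E.
  by apply: integral_ge0 => w _; rewrite lee_fin sumr_ge0 // => k _; exact: sqr_ge0.
have dist_le0 : (2^-1%:E * \int[P]_w (sq_dist f g w)%:E <= 0)%E.
  have := mse_mid_fun mf mg; rewrite -fg_eq -(fineK f_fin_num).
  have := f_opt _ (rV_measurable_mid_fun mf mg); rewrite -(fineK f_fin_num).
  set r := fine _ => r_le mid_eq.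
  have two_r : (2 * r)%:E = (r%:E + r%:E)%E by rewrite -EFinD mulr_natl mulr2n.
  suff : ((2 * r)%:E + 2^-1%:E * \int[P]_w (sq_dist f g w)%:E <= (2 * r)%:E + 0)%E.
    by rewrite leeD2lE.
  rewrite adde0 [X in (_ <= X)%E]two_r mid_eq; apply: leeD2r.
  by rewrite EFinM; exact: lee_wpmul2l.
have dist0 : (\int[P]_w (sq_dist f g w)%:E = 0)%E.
  apply/le_anti; rewrite dist_ge0 andbT.
  by rewrite -(pmule_rle0 _ (_ : 0 < 2^-1%:E)%E) // lte_fin invr_gt0.
have : ae_eq P setT (fun w => (sq_dist f g w)%:E) (cst 0%E).
  apply/(ae_eq_integral_abs _ measurableT); first exact: measurable_sq_dist.
  rewrite -[RHS]dist0; apply: eq_integral => w _; rewrite gee0_abs // lee_fin.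
  by rewrite sumr_ge0 // => k _; exact: sqr_ge0.
apply: filterS => w /(_ I) [] /(psumr_eq0P (fun k _ => sqr_ge0 _)) fg0.
by apply/rowP => k; apply/eqP; rewrite -subr_eq0 -sqrf_eq0 fg0.
Qed.

End mse_uniqueness.

Section freeze_coords.
Variables (R : realType) (d0 : measure_display) (Omega : measurableType d0)
  (P : probability Omega R) (d : nat) (x z : Omega -> 'rV[R]_d).
Hypotheses (rvx : random_vector x) (rvz : random_vector z).
Hypothesis indep : std_gaussian_indep P x z.
Variables (Y : Omega -> 'rV[R]_d) (a : 'I_d -> R).
Hypothesis Y_coord : forall w l, Y w ord0 l = a l * x w ord0 l + (1 - a l) * z w ord0 l.

Lemma measurable_Y : measurable_fun setT (Y : Omega -> rV_meas R d).
Proof.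
apply: measurable_fun_rV => l.
rewrite (_ : (fun w => _) = (fun w => a l * x w ord0 l + (1 - a l) * z w ord0 l)).
  by apply: measurable_funD; apply: measurable_funM.
by apply/funext => w; rewrite Y_coord.
Qed.

Section freeze_coord.
Variable i : 'I_d.
Hypothesis a_i : a i = 0.

Local Notation N := (normal_prob (0 : R) 1).

Lemma Y_coord_i w : Y w ord0 i = z w ord0 i.
Proof. by rewrite Y_coord a_i mul0r add0r subr0 mul1r. Qed.

Definition cylinders_off_i : set (set Omega) :=
  [set E | exists (A : set 'rV[R]_d) (B : 'I_d -> set R),
    [/\ rV_borel A, forall k, measurable (B k), B i = setT &
        E = [set w | A (x w) /\ forall k, B k (z w ord0 k)]]].

(* [Omega] equipped with the sigma-algebra generated by [x] and the [z_l], [l != i]. *)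
Local Notation Omega_i := (g_sigma_algebraType cylinders_off_i).
Local Notation Rborel := (g_sigma_algebraType R.-ocitv.-measurable).

Lemma measurable_cylinder_off_i E : cylinders_off_i E -> measurable E.
Proof.
move=> [A [B [mA mB _ ->]]].
rewrite [X in measurable X](_ : _ = x @^-1` A `&` [set w | forall k, B k (z w ord0 k)]) //.
apply: measurableI.
  by have := measurable_fun_rV rvx measurableT mA; rewrite setTI.
by apply: measurable_forall_ord => k; have := rvz k measurableT (mB k); rewrite setTI.
Qed.

Lemma cylinders_off_i_setI : setI_closed cylinders_off_i.
Proof.
move=> _ _ [A1 [B1 [mA1 mB1 B1i ->]]] [A2 [B2 [mA2 mB2 B2i ->]]].
exists (A1 `&` A2), (fun k => B1 k `&` B2 k); split.
- exact: (@measurableI _ (rV_meas R d)).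
- by move=> k; exact: measurableI.
- by rewrite B1i B2i setIT.
apply/seteqP; split=> w /=.
  by move=> [[? B1z] [? B2z]]; split; [split|move=> k; split; [exact: B1z|exact: B2z]].
by move=> [[? ?] Bz]; split; split => // k; have [] := Bz k.
Qed.

Definition to_Omega_i : Omega -> Omega_i := id.

Lemma measurable_to_Omega_i : measurable_fun setT to_Omega_i.
Proof.
apply: (@measurability _ _ Omega Omega_i setT to_Omega_i cylinders_off_i) => //.
by move=> _ [E cE <-]; rewrite setTI; exact: measurable_cylinder_off_i.
Qed.

HB.instance Definition _ :=
  isMeasurableFun.Build _ _ _ _ to_Omega_i measurable_to_Omega_i.

Lemma measurable_Omega_i (A : set Omega_i) : measurable A -> measurable (A : set Omega).
Proof. by move=> mA; have := measurable_to_Omega_i measurableT mA; rewrite setTI. Qed.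

Lemma measurable_x_Omega_i k : measurable_fun setT (fun w : Omega_i => x w ord0 k).
Proof.
move=> _ B mB; rewrite setTI; apply: sub_sigma_algebra.
exists ((fun v : 'rV[R]_d => v ord0 k) @^-1` B), (fun _ => setT); split => //.
  by have := measurable_coord k measurableT mB; rewrite setTI.
by apply/seteqP; split => w /=; [move=> ?; split|case].
Qed.

Lemma measurable_z_Omega_i l : l != i ->
  measurable_fun setT (fun w : Omega_i => z w ord0 l).
Proof.
move=> li _ B mB; rewrite setTI; apply: sub_sigma_algebra.
exists setT, (fun m => if m == l then B else setT); split.
- exact: (@measurableT _ (rV_meas R d)).
- by move=> m; case: ifP.
- by rewrite eq_sym (negbTE li).
apply/seteqP; split => w /=; first by move=> Bz; split => // m; case: eqP => // ->.
by case=> _ /(_ l); rewrite eqxx.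
Qed.

Lemma measurable_Y_Omega_i l : l != i ->
  measurable_fun setT (fun w : Omega_i => Y w ord0 l).
Proof.
move=> li.
rewrite (_ : (fun w => _) = (fun w => a l * x w ord0 l + (1 - a l) * z w ord0 l)).
  apply: measurable_funD; apply: measurable_funM => //.
    exact: measurable_x_Omega_i.
  exact: measurable_z_Omega_i.
by apply/funext => w; rewrite Y_coord.
Qed.

Lemma measurable_freeze_Y :
  measurable_fun setT (fun p : Omega_i * Rborel => set_coord i p.2 (Y p.1) : rV_meas R d).
Proof.
apply: measurable_fun_rV => l; have [->|li] := eqVneq l i.
  rewrite (_ : (fun p => _) = snd); first exact: measurable_snd.
  by apply/funext => p; rewrite mxE eqxx.
rewrite (_ : (fun p => _) = (fun w => Y w ord0 l) \o fst).
  exact: measurableT_comp (measurable_Y_Omega_i li) measurable_fst.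
by apply/funext => p; rewrite mxE (negbTE li).
Qed.

Definition sq_err_freeze (h : 'rV[R]_d -> 'rV[R]_d) (p : Omega_i * Rborel) : \bar R :=
  (\sum_(k < d) (x p.1 ord0 k - h (set_coord i p.2 (Y p.1)) ord0 k) ^+ 2)%:E.

Lemma sq_err_freeze_ge0 h p : (0 <= sq_err_freeze h p)%E.
Proof. by rewrite lee_fin sumr_ge0 // => k _; exact: sqr_ge0. Qed.

Lemma measurable_sq_err_freeze h : rV_measurable_fun h ->
  measurable_fun setT (sq_err_freeze h).
Proof.
move/rV_measurable_funP => mh; apply/measurable_EFinP; apply: measurable_sum => k.
apply: measurable_funX; apply: measurable_funB.
  exact: measurableT_comp (measurable_x_Omega_i k) measurable_fst.
exact: measurableT_comp (mh k) measurable_freeze_Y.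
Qed.

Definition pair_z_i (w : Omega) : Omega_i * Rborel := (to_Omega_i w, z w ord0 i).

Lemma measurable_pair_z_i : measurable_fun setT pair_z_i.
Proof. by apply: measurable_fun_pair; [exact: measurable_to_Omega_i|exact: rvz]. Qed.

HB.instance Definition _ := isMeasurableFun.Build _ _ _ _ pair_z_i measurable_pair_z_i.

Local Notation P_i := (distribution P to_Omega_i).

Lemma indep_cylinder_z_i (E : set Omega) (C : set R) : cylinders_off_i E -> measurable C ->
  P (E `&` [set w | C (z w ord0 i)]) = (P E * N C)%E.
Proof.
move=> [A [B [mA mB Bi ->]]] mC.
pose B' k := if k == i then C else B k.
have mB' k : measurable (B' k) by rewrite /B'; case: ifP.
rewrite [X in P X](_ : _ = [set w | A (x w) /\ forall k, B' k (z w ord0 k)]); last first.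
  apply/seteqP; split => w /=.
  - by move=> [[Ax Bz] Cz]; split => // k; rewrite /B'; case: eqP => [->|].
  - move=> [Ax B'z]; split; last by have := B'z i; rewrite /B' eqxx.
    by split => // k; have := B'z k; rewrite /B'; case: eqP => [->|//] _; rewrite Bi.
rewrite (indep mA mB') (indep mA mB).
rewrite (bigD1 i) //= [X in _ = (_ * X * _)%E](bigD1 i) //=.
rewrite /B' eqxx Bi probability_setT mul1e.
rewrite (eq_bigr (fun k => N (B k))); last by move=> k /negbTE ->.
by rewrite [(N C * _)%E]muleC muleA.
Qed.

Lemma cylinders_off_i_setT : cylinders_off_i setT.
Proof.
exists setT, (fun _ => setT); split => //; first exact: (@measurableT _ (rV_meas R d)).
by apply/seteqP; split.
Qed.

Lemma law_z_i (C : set R) : measurable C -> P [set w | C (z w ord0 i)] = N C.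
Proof.
move=> mC; have := indep_cylinder_z_i cylinders_off_i_setT mC.
by rewrite setTI probability_setT mul1e.
Qed.

Lemma measurable_z_i_event (C : set R) :
  measurable C -> measurable [set w | C (z w ord0 i)].
Proof. by move=> mC; have := rvz i measurableT mC; rewrite setTI. Qed.

Lemma indep_z_i_setC (C : set R) (S : set Omega) : measurable C -> measurable S ->
  P (S `&` [set w | C (z w ord0 i)]) = (P S * N C)%E ->
  P (~` S `&` [set w | C (z w ord0 i)]) = (P (~` S) * N C)%E.
Proof.
move=> mC mS indepS; have mZ := measurable_z_i_event mC.
have NC_fin : N C \is a fin_num by exact: fin_num_measure.
have PS_fin : P S \is a fin_num by exact: fin_num_measure.
rewrite probability_setC // setIC -setDE measureD //; last first.
  by rewrite (le_lt_trans (probability_le1 _ mZ)) ?ltry.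
rewrite [X in (_ - P X)%E]setIC indepS [X in (X - _)%E](law_z_i mC).
rewrite -(fineK PS_fin) -(fineK NC_fin) -EFinM -EFinB -EFinB -EFinM.
by congr EFin; rewrite mulrBl mul1r.
Qed.

Lemma indep_z_i_bigcup (C : set R) (F : (set Omega)^nat) : measurable C ->
  (forall n, measurable (F n)) -> trivIset setT F ->
  (forall n, P (F n `&` [set w | C (z w ord0 i)]) = (P (F n) * N C)%E) ->
  P (\bigcup_n F n `&` [set w | C (z w ord0 i)]) = (P (\bigcup_n F n) * N C)%E.
Proof.
move=> mC mF tF indepF; have mZ := measurable_z_i_event mC.
have NC_fin : N C \is a fin_num by exact: fin_num_measure.
rewrite setI_bigcupl !measure_semi_bigcup //;
  try (by apply: bigcupT_measurable => n; exact: measurableI);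
  try (exact: trivIset_setIr); try (by move=> n; exact: measurableI);
  try (exact: bigcupT_measurable).
transitivity (\sum_(n <oo) ((fine (N C))%:E * P (F n)))%E.
  by apply: eq_eseriesr => n _; rewrite fineK // muleC; exact: indepF.
by rewrite nneseriesZl // fineK // muleC.
Qed.

Lemma indep_Omega_i_z_i (C : set R) : measurable C -> forall S : set Omega_i,
  measurable S -> P (S `&` [set w | C (z w ord0 i)]) = (P S * N C)%E.
Proof.
move=> mC; apply: (@dynkin_induction _ Omega_i cylinders_off_i
  (fun S => P (S `&` [set w | C (z w ord0 i)]) = (P S * N C)%E)) => //.
- exact: cylinders_off_i_setI.
- by rewrite setTI probability_setT mul1e law_z_i.
- by move=> E cE; exact: indep_cylinder_z_i.
- by move=> E mE; exact: indep_z_i_setC mC (measurable_Omega_i mE).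
- by move=> F mF; exact: indep_z_i_bigcup mC (fun n => measurable_Omega_i (mF n)).
Qed.

Lemma distribution_pair_z_i (X : set (Omega_i * Rborel)) : measurable X ->
  (P_i \x N)%E X = distribution P pair_z_i X.
Proof.
by apply: product_measure_unique => A B mA mB; exact: indep_Omega_i_z_i.
Qed.

Lemma mse_freeze h : rV_measurable_fun h ->
  (fun c : Rborel => mse P x Y (fun y => h (set_coord i c y))) =
  fubini_G P_i (sq_err_freeze h).
Proof.
move=> mh; apply/funext => c.
rewrite /fubini_G /distribution (ge0_integral_pushforward measurable_to_Omega_i) //.
- by apply: measurableT_comp (measurable_sq_err_freeze mh) _; exact: measurable_fun_pair.
- by move=> w _; exact: sq_err_freeze_ge0.
Qed.

(* By independence the law of (x, (z_l)_(l != i), z_i) is [P_i \x N], so by Tonelli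
   the average over c is the error with coordinate i set to z_i = Y_i. *)
Lemma mse_freeze_average h : rV_measurable_fun h ->
  (\int[N]_c mse P x Y (fun y => h (set_coord i c y)) = mse P x Y h)%E.
Proof.
move=> mh; have msq := measurable_sq_err_freeze mh.
rewrite (mse_freeze mh) -fubini_tonelli2 //; last exact: sq_err_freeze_ge0.
rewrite (eq_measure_integral (distribution P pair_z_i)); last first.
  by move=> A mA _; exact: distribution_pair_z_i.
rewrite ge0_integral_pushforward //; last by move=> p _; exact: sq_err_freeze_ge0.
by apply: eq_integral => w _; rewrite /sq_err_freeze /= set_coord_id // Y_coord_i.
Qed.

Lemma optimal_denoiser_freeze h : optimal_denoiser P x Y h -> (mse P x Y h < +oo)%E ->
  exists c : R, optimal_denoiser P x Y (fun y => h (set_coord i c y)).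
Proof.
move=> [mh h_opt] h_fin.
have h_fin_num : mse P x Y h \is a fin_num by rewrite ge0_fin_numE ?mse_ge0.
have [c hc_eq] : exists c : Rborel,
    mse P x Y (fun y => h (set_coord i c y)) = (fine (mse P x Y h))%:E.
  apply: (@probability_integral_eq_lbound _ _ _ N); first exact/fine_ge0/mse_ge0.
  - rewrite (mse_freeze mh).
    exact: measurable_fun_fubini_tonelli_G
      (measurable_sq_err_freeze mh) (sq_err_freeze_ge0 h).
  - by move=> c; rewrite fineK //; apply: h_opt; exact: rV_measurable_fun_set_coord.
  - by rewrite fineK //; exact: mse_freeze_average.
exists c; split; first exact: rV_measurable_fun_set_coord.
by move=> h' mh'; rewrite hc_eq fineK //; exact: h_opt.
Qed.

End freeze_coord.

Lemma optimal_denoiser_freeze_seq (s : seq 'I_d) f :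
  (forall l, l \in s -> a l = 0) ->
  (\int[P]_w (\sum_(k < d) (x w ord0 k) ^+ 2)%:E < +oo)%E ->
  optimal_denoiser P x Y f ->
  exists g, optimal_denoiser P x Y g /\
    forall l, l \in s -> forall y u, g (set_coord l u y) = g y.
Proof.
move=> + x2_fin; elim: s => [|l s IHs] a_s f_opt; first by exists f.
have [g [g_opt g_s]] : exists g, optimal_denoiser P x Y g /\
    forall k, k \in s -> forall y u, g (set_coord k u y) = g y.
  by apply: IHs f_opt => k ks; apply: a_s; rewrite inE ks orbT.
have [c gc_opt] := optimal_denoiser_freeze (a_s l (mem_head l s)) g_opt
  (optimal_denoiser_mse_lt_oo x2_fin g_opt).
exists (fun y => g (set_coord l c y)); split => // k; rewrite inE => /predU1P[->|ks] y u.
  by rewrite set_coordK.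
have [->|kl] := eqVneq k l; first by rewrite set_coordK.
by rewrite set_coordC 1?eq_sym // g_s.
Qed.

End freeze_coords.

Lemma group_coef_gt (R : realType) (ts te t : R) : ts < te -> te < t ->
  group_coef ts te t = 0.
Proof.
move=> ts_te te_t; rewrite /group_coef.
by rewrite leNgt (lt_trans ts_te te_t) /= leNgt te_t.
Qed.

Theorem proposition3 (R : realType) (d0 : measure_display)
    (Omega : measurableType d0) (P : probability Omega R)
    (d k : nat) (x z : Omega -> 'rV[R]_d)
    (grp : 'I_d -> 'I_k) (ts te : 'I_k -> R) :
  random_vector x -> random_vector z ->
  std_gaussian_indep P x z ->
  (\int[P]_w (\sum_(i < d) (x w ord0 i) ^+ 2)%:E < +oo)%E ->
  (forall j, 0 <= ts j < te j) ->
  (forall j j', j != j' -> ~ (exists s, ts j < s < te j /\ ts j' < s < te j')) ->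
  forall (t : R) (j : 'I_k), te j < t ->
  forall f, optimal_denoiser P x (groupwise_xt grp ts te x z t) f ->
  exists g,
    optimal_denoiser P x (groupwise_xt grp ts te x z t) g /\
    {ae P, forall w, f (groupwise_xt grp ts te x z t w)
                     = g (groupwise_xt grp ts te x z t w)} /\
    forall i : 'I_d, grp i = j -> forall y : 'rV[R]_d,
      derivable g y (delta_mx ord0 i) /\ 'D_(delta_mx ord0 i) g y = 0.
Proof.
move=> rvx rvz indep x2_fin ts_te _ t j te_t f f_opt.
set Y := groupwise_xt grp ts te x z t.
pose a l := group_coef (ts (grp l)) (te (grp l)) t.
have Y_coord w l : Y w ord0 l = a l * x w ord0 l + (1 - a l) * z w ord0 l by rewrite mxE.
have a_j l : l \in [seq l <- enum 'I_d | grp l == j] -> a l = 0.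
  rewrite mem_filter => /andP[/eqP grp_l _]; rewrite /a grp_l.
  by have /andP[_ ts_te_j] := ts_te j; exact: group_coef_gt.
have [g [g_opt g_frozen]] :=
  optimal_denoiser_freeze_seq rvx rvz indep Y_coord a_j x2_fin f_opt.
exists g; split => //; split.
  by have := optimal_denoiser_ae_unique rvx (measurable_Y rvx rvz Y_coord) f_opt g_opt
    (optimal_denoiser_mse_lt_oo x2_fin f_opt).
move=> i grp_i y; apply: derive_invariant_dir => r.
by rewrite scale_delta_addr g_frozen // mem_filter grp_i eqxx mem_enum.
Qed.
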